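(* Let $G$ be a median graph in $\mathcal{U}_3$ with $n\ge 3$ vertices and $v_0$ its unique vertex lying in every majority halfspace. Let $u,v$ be vertices different from $v_0$ with $L_{v_0,u}\ne L_{v_0,v}$ and $L_{v_0,u}\cap L_{v_0,v}\neq\emptyset$, and let $m=m(u,v,v_0)$ be the median of $u,v,v_0$ (the unique vertex of $I(u,v)\cap I(v,v_0)\cap I(v_0,u)$). Then $m\ne v_0$ and $L_{v_0,m}=L_{v_0,u}\cap L_{v_0,v}$.
   Context: Graphs are finite, simple, connected, undirected; $d$ is shortest-path distance; $I(u,v)=\{x:d(u,x)+d(x,v)=d(u,v)\}$; a graph is median if every triple $x,y,z$ has $|I(x,y)\cap I(y,z)\cap I(z,x)|=1$. $\Theta$-classes: classes of the reflexive–transitive closure of the relation on edges ''opposite edges of a 4-cycle''; deleting a $\Theta$-class $E_i$ of a median graph leaves two components with vertex sets (halfspaces) $H_i',H_i''$. $\mathcal{U}_3$ is the family of median graphs with $n$ vertices in which every $\Theta$-class satisfies $\min\{|H_i'|,|H_i''|\}<n/3$; the larger halfspace is the majority halfspace. For $u\ne v$, the ladder set $L_{u,v}$ is the set of $\Theta$-classes $E_i$ such that $u,v$ lie in different halfspaces of $E_i$ and $u$ is an endpoint of an edge of $E_i$. *)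

From mathcomp Require Import all_boot.
Set Implicit Arguments. Unset Strict Implicit. Unset Printing Implicit Defensive.

Section Graphs.
Variables (T : finType) (e : rel T).

Definition simple_connected_graph : Prop :=
  symmetric e /\ irreflexive e /\ (forall x y : T, connect e x y).

Definition walkb (x y : T) (k : nat) : bool :=
  [exists p : k.-tuple T, path e x p && (last x p == y)].

(* shortest-path distance: the least k (< #|T|) such that a walk of length k
   from x to y exists; in a connected graph this is d(x,y). *)
Definition dist (x y : T) : nat := find (walkb x y) (iota 0 #|T|).

Definition interval (u v : T) : {set T} :=
  [set x | dist u x + dist x v == dist u v].

Definition median_graph : Prop :=
  forall x y z : T,
    #|interval x y :&: interval y z :&: interval z x| = 1.

(* edges as ordered pairs; an unordered edge {a,b} is represented by both
   (a,b) and (b,a). *)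
Definition is_edge (p : T * T) : bool := e p.1 p.2.

(* one step of the relation generating Theta: either the same edge with the
   other orientation, or (a,b),(c,d) opposite edges of the 4-cycle a-b-d-c-a *)
Definition theta_step (p q : T * T) : bool :=
  is_edge p && is_edge q &&
  ((q == (p.2, p.1)) ||
   [&& e p.1 q.1, e p.2 q.2, p.1 != q.2 & p.2 != q.1]).

Definition theta_class (a b : T) : {set T * T} :=
  [set q | is_edge q && connect theta_step (a, b) q].

Definition is_theta_class (E : {set T * T}) : bool :=
  [exists a : T, exists b : T, e a b && (E == theta_class a b)].

Definition del_rel (E : {set T * T}) : rel T :=
  fun x y => e x y && ((x, y) \notin E).

(* the component of x in G - E (a halfspace when x is an endpoint of an
   edge of E) *)
Definition halfspace (E : {set T * T}) (x : T) : {set T} :=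
  [set y | connect (del_rel E) x y].

Definition in_U3 : Prop :=
  forall a b : T, e a b ->
    3 * minn #|halfspace (theta_class a b) a|
             #|halfspace (theta_class a b) b| < #|T|.

Definition in_all_majority_halfspaces (v0 : T) : Prop :=
  forall a b : T, e a b ->
    #|halfspace (theta_class a b) b| < #|halfspace (theta_class a b) a| ->
    v0 \in halfspace (theta_class a b) a.

Definition ladder (u v : T) : {set {set T * T}} :=
  [set E | [&& is_theta_class E,
              ~~ connect (del_rel E) u v &
              [exists w : T, (u, w) \in E]]].

End Graphs.

From mathcomp Require Import all_boot zify.
Set Implicit Arguments. Unset Strict Implicit. Unset Printing Implicit Defensive.

(* For an edge ab of a median graph let W_ab be the set of vertices closer to
   a than to b. The median of an edge and a vertex is an endpoint of the edge,
   so the graph is bipartite and W_ab, W_ba partition the vertices. Both are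
   convex: an edge xt from W_ab to W_ba can be pushed, square by square, down
   to ab, and a geodesic from x through t never returns to W_ab, because a
   K_{2,3} would contradict uniqueness of medians. Hence the Theta-class of ab
   consists exactly of the edges between W_ab and W_ba, and its halfspaces are
   W_ab and W_ba.
   As m lies on geodesics between any two of u, v, v0, convexity shows that a
   class separates v0 from m iff it separates v0 from both u and v. So the
   ladder identity holds in every median graph, and a class in
   L_{v0,u} ∩ L_{v0,v} separates v0 from m, whence m <> v0. *)

(* [lia] on the arithmetic hypotheses only: zify is very slow on the
   boolean hypotheses about vertices that accumulate in these proofs. *)
Ltac nlia :=
  repeat match goal with
  | H : is_true (_ <= _) |- _ => revert H
  | H : @eq nat _ _ |- _ => revert H
  | H : ~ (@eq nat _ _) |- _ => revert H
  end; clear; intros; lia.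

Section MedianGraph.
Variables (T : finType) (e : rel T).
Hypothesis e_sym : symmetric e.
Hypothesis e_irr : irreflexive e.
Hypothesis e_conn : forall x y, connect e x y.
Hypothesis e_med : median_graph e.
Local Notation d := (dist e).

Lemma walkb0 x y : walkb e x y 0 = (x == y).
Proof.
apply/existsP/eqP => [[p /andP[_ /eqP]]|->]; first by rewrite tuple0.
by exists [tuple]; rewrite /= eqxx.
Qed.

Lemma walkbS x y k : walkb e x y k.+1 = [exists z, e x z && walkb e z y k].
Proof.
apply/existsP/existsP => [[p]|[z /andP[exz /existsP[q hq]]]].
  case: p / tupleP => z q /= /andP[/andP[exz pq] hl].
  by exists z; rewrite exz; apply/existsP; exists q; rewrite pq.
by exists [tuple of z :: q]; rewrite /= exz.
Qed.

Lemma walkb_cat x y z i j :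
  walkb e x y i -> walkb e y z j -> walkb e x z (i + j).
Proof.
elim: i x => [|i IH] x; first by rewrite walkb0 => /eqP ->.
rewrite walkbS addSn walkbS => /existsP[w /andP[exw hw]] hj.
by apply/existsP; exists w; rewrite exw (IH _ hw hj).
Qed.

Lemma walkb_sym x y k : walkb e x y k -> walkb e y x k.
Proof.
elim: k x y => [|k IH] x y; first by rewrite !walkb0 eq_sym.
rewrite walkbS -addn1 => /existsP[z /andP[exz hz]].
apply: walkb_cat (IH _ _ hz) _.
by rewrite walkbS; apply/existsP; exists x; rewrite walkb0 eqxx e_sym exz.
Qed.

Lemma walkb_short x y : exists2 k, k < #|T| & walkb e x y k.
Proof.
have /connectP[p pth ->] := e_conn x y.
case: (shortenP pth) => p' pth' up _.
exists (size p').
  by have := max_card (mem (x :: p')); rewrite (card_uniqP up).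
by apply/existsP; exists (in_tuple p'); rewrite /= pth' eqxx.
Qed.

Lemma has_walkb x y : has (walkb e x y) (iota 0 #|T|).
Proof.
have [k hk hw] := walkb_short x y.
by apply/hasP; exists k; rewrite ?mem_iota.
Qed.

Lemma dist_walkb x y : walkb e x y (d x y).
Proof.
have hs := has_walkb x y; have := nth_find 0 hs.
by rewrite has_find size_iota in hs; rewrite nth_iota.
Qed.

Lemma dist_le x y k : walkb e x y k -> d x y <= k.
Proof.
move=> hk; have := has_walkb x y; rewrite has_find size_iota => hlt.
rewrite leqNgt; apply/negP => hk'.
have hkT : k < #|T| by apply: ltn_trans hlt.
by have := before_find 0 hk'; rewrite nth_iota // add0n hk.
Qed.

Lemma dist0 x : d x x = 0.
Proof. by apply/eqP; rewrite -leqn0 dist_le // walkb0. Qed.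

Lemma dist_eq0 x y : d x y = 0 -> x = y.
Proof. by move=> h; have := dist_walkb x y; rewrite h walkb0 => /eqP. Qed.

Lemma distC x y : d x y = d y x.
Proof. by apply/eqP; rewrite eqn_leq !dist_le // walkb_sym // dist_walkb. Qed.

Lemma dist_triangle x y z : d x z <= d x y + d y z.
Proof. by apply: dist_le; apply: walkb_cat; apply: dist_walkb. Qed.

Lemma dist_edge x y : e x y -> d x y = 1.
Proof.
move=> exy; apply/eqP; rewrite eqn_leq lt0n; apply/andP; split.
  by apply: dist_le; rewrite walkbS; apply/existsP; exists y; rewrite walkb0 eqxx exy.
by apply/eqP => /dist_eq0 hxy; move: exy; rewrite hxy e_irr.
Qed.

Lemma dist_edgeC x y : e x y -> d y x = 1.
Proof. by rewrite distC; apply: dist_edge. Qed.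

Lemma dist1_edge x y : d x y = 1 -> e x y.
Proof.
move=> h; have := dist_walkb x y; rewrite h walkbS => /existsP[z /andP[exz]].
by rewrite walkb0 => /eqP <-.
Qed.

Lemma dist_step x y k : d x y = k.+1 -> exists2 z, e x z & d z y = k.
Proof.
move=> h; have := dist_walkb x y; rewrite h walkbS => /existsP[z /andP[exz hz]].
exists z => //; apply/eqP; rewrite eqn_leq dist_le //=.
by have := dist_triangle x z y; rewrite (dist_edge exz) h; nlia.
Qed.

Lemma median_exists x y z : exists m,
  [/\ d x m + d m y = d x y, d y m + d m z = d y z & d z m + d m x = d z x].
Proof.
have /eqP/cards1P[m hm] := e_med x y z.
have : m \in [set m] by rewrite inE.
by rewrite -hm !inE => /andP[/andP[/eqP h1 /eqP h2] /eqP h3]; exists m.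
Qed.

Lemma median_unique x y z m1 m2 :
  d x m1 + d m1 y = d x y -> d y m1 + d m1 z = d y z -> d z m1 + d m1 x = d z x ->
  d x m2 + d m2 y = d x y -> d y m2 + d m2 z = d y z -> d z m2 + d m2 x = d z x ->
  m1 = m2.
Proof.
move=> a1 a2 a3 b1 b2 b3; have /eqP/cards1P[m hm] := e_med x y z.
have : m1 \in [set m] by rewrite -hm !inE a1 a2 a3 !eqxx.
have : m2 \in [set m] by rewrite -hm !inE b1 b2 b3 !eqxx.
by rewrite !inE => /eqP -> /eqP ->.
Qed.

(* The median of an edge xy and a vertex z is x or y, so z lies strictly
   closer to one of them: median graphs are bipartite. *)
Lemma dist_edge_neq x y z : e x y -> d x z <> d y z.
Proof.
move=> exy; have [m [hxy hyz hzx]] := median_exists x y z.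
have := distC x y; have := distC x z; have := distC y z.
rewrite (dist_edge exy) in hxy *.
have : d x m = 0 \/ d m y = 0 by nlia.
by case=> /dist_eq0 hm; subst m; rewrite !dist0 in hyz hzx; nlia.
Qed.

Lemma dist_adjacent x y z : e x y -> d x z = d y z + 1 \/ d y z = d x z + 1.
Proof.
move=> exy; have := @dist_edge_neq x y z exy.
have := dist_triangle x y z; have := dist_triangle y x z.
have := dist_edge exy; have := distC x y; nlia.
Qed.

Lemma no_triangle x y z : e x y -> e y z -> e x z -> False.
Proof.
move=> exy eyz exz; apply: (@dist_edge_neq x y z exy).
by rewrite (dist_edge exz) (dist_edge eyz).
Qed.

Lemma dist_common_neighbour x y z : x != z -> e x y -> e y z -> d x z = 2.
Proof.
move=> /eqP nxz exy eyz; have := dist_triangle x y z.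
rewrite (dist_edge exy) (dist_edge eyz).
have : d x z <> 0 by move/dist_eq0.
have : d x z <> 1 by move/dist1_edge; apply: no_triangle exy eyz.
nlia.
Qed.

(* Both p and q are medians of c1, c2, c3, which are pairwise at distance 2. *)
Lemma K23_free p q c1 c2 c3 : c1 != c2 -> c1 != c3 -> c2 != c3 ->
  e p c1 -> e p c2 -> e p c3 -> e q c1 -> e q c2 -> e q c3 -> p = q.
Proof.
move=> n12 n13 n23 p1 p2 p3 q1 q2 q3.
have d2 c c' : c != c' -> e p c -> e p c' -> d c c' = 2.
  by move=> ncc pc pc'; apply: (dist_common_neighbour ncc) pc'; rewrite e_sym.
have one x y : e x y -> d x y = 1 /\ d y x = 1.
  by move=> exy; rewrite dist_edge // dist_edgeC.
have [a1 a1'] := one _ _ p1; have [a2 a2'] := one _ _ p2; have [a3 a3'] := one _ _ p3.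
have [b1 b1'] := one _ _ q1; have [b2 b2'] := one _ _ q2; have [b3 b3'] := one _ _ q3.
apply: (@median_unique c1 c2 c3);
  by rewrite ?a1 ?a1' ?a2 ?a2' ?a3 ?a3' ?b1 ?b1' ?b2 ?b2' ?b3 ?b3'
             ?(d2 _ _ n12 p1 p2) ?(d2 _ _ n23 p2 p3) ?(distC c3 c1) ?(d2 _ _ n13 p1 p3).
Qed.

Definition W (a b : T) : pred T := fun x => d x a < d x b.

Lemma W_disjoint a b x : W a b x -> W b a x -> False.
Proof. by rewrite /W; nlia. Qed.

Lemma W_swap a b x : e a b -> ~~ W a b x = W b a x.
Proof.
move=> eab; have := @dist_edge_neq a b x eab; rewrite /W (distC a x) (distC b x).
by case: ltngtP.
Qed.

Lemma W_dist a b x : e a b -> W a b x -> d x b = d x a + 1.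
Proof.
move=> eab; rewrite /W; have := dist_triangle x a b; rewrite (dist_edge eab); nlia.
Qed.

Lemma W_between a b x y : W a b x -> d x y + d y a = d x a -> W a b y.
Proof. by rewrite /W => Wx hy; have := dist_triangle x y b; nlia. Qed.

Lemma W_neq a b x y : W a b x -> W b a y -> x != y.
Proof. by move=> Wx Wy; apply/eqP => hxy; subst y; apply: W_disjoint Wx Wy. Qed.

Lemma crossing_edge_at a b t : e a b -> e a t -> W b a t -> t = b.
Proof.
move=> eab eat; rewrite e_sym in eab.
move=> /(W_dist eab); rewrite distC (dist_edge eat) => htb.
by apply: dist_eq0; nlia.
Qed.

Lemma crossing_edge_descend a b x t n : e a b -> e x t -> W a b x -> W b a t ->
  d x a = n.+1 ->
  exists x' t',
    [/\ e x' x, e t' t & e x' t'] /\ [/\ d x' a = n, W a b x' & W b a t'].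
Proof.
move=> eab ext Wx Wt hxa; have eba : e b a by rewrite e_sym.
have dxb := W_dist eab Wx; have dta := W_dist eba Wt.
have := dist_triangle t x a; have := dist_triangle x t b.
rewrite (dist_edge ext) (dist_edgeC ext) => htb hta.
have [x' exx' hx'a] := dist_step hxa.
have Wx' : W a b x' by apply: W_between Wx _; rewrite (dist_edge exx'); nlia.
have dx'b := W_dist eab Wx'.
have dx't : d x' t = 2.
  have := dist_triangle t x' a; have := dist_triangle x' x t; have := distC t x'.
  by rewrite (dist_edge ext) (dist_edgeC exx'); nlia.
have [t' [m1 m2 m3]] := median_exists x' t b.
have := distC b t'; have := distC b x'; have := distC t' t; have := distC t' x'.
move=> s1 s2 s3 s4.
have dx't' : d x' t' = 1 by nlia.
have dtt' : d t t' = 1 by nlia.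
exists x', t'; split; split => //.
- by rewrite e_sym.
- by apply: dist1_edge; nlia.
- exact: dist1_edge.
- by apply: W_between Wt _; nlia.
Qed.

(* Induction on d(x,a) along the squares of [crossing_edge_descend]: either a
   geodesic from x' to y starts with the crossing edge x't', or x, t' and the
   median of x', t, y are three common neighbours of x' and t. *)
Lemma W_geodesic_step a b x t y : e a b -> W a b x -> W a b y -> e x t ->
  d t y + 1 = d x y -> W a b t.
Proof.
move=> eab Wx Wy ext hty; apply/negPn/negP; rewrite W_swap // => Wt.
have [n hxa] : exists n, d x a = n by eexists.
elim: n x t hxa Wx ext hty Wt => [|n IH] x t hxa Wx ext hty Wt.
  move/dist_eq0: hxa => hxa; subst x; have htb := crossing_edge_at eab ext Wt.
  by subst t; move: Wy; rewrite /W (distC y a) (distC y b); nlia.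
have [x' [t' [[ex'x et't ex't'] [hx'a Wx' Wt']]]] :=
  crossing_edge_descend eab ext Wx Wt hxa.
have : d t' y + 1 = d x' y \/ d t' y = d t y + 1 /\ d x' y + 1 = d x y.
  have := @dist_adjacent _ _ y ex'x; have := @dist_adjacent _ _ y et't.
  by have := @dist_adjacent _ _ y ex't'; nlia.
case=> [ht'y|[ht'y hx'y]].
  exact: IH x' t' hx'a Wx' ex't' ht'y Wt'.
have nx't := W_neq Wx' Wt.
have [m [m1 m2 m3]] := median_exists x' t y.
have := dist_common_neighbour nx't ex'x ext.
have := distC y m; have := distC y x'; have := distC m t; have := distC m x'.
move=> s1 s2 s3 s4 dx't.
have ex'm : e x' m by apply: dist1_edge; nlia.
have etm : e t m by apply: dist1_edge; nlia.
have nxt' : x != t' := W_neq Wx Wt'.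
have nxm : x != m by apply/eqP => hxm; subst m; nlia.
have nt'm : t' != m by apply/eqP => ht'm; subst m; nlia.
have hx't : x' = t by apply: (@K23_free x' t x t' m); rewrite // e_sym.
by move: nx't; rewrite hx't eqxx.
Qed.

Lemma W_convex a b x y z : e a b -> W a b x -> W a b y ->
  d x z + d z y = d x y -> W a b z.
Proof.
move=> eab Wx Wy; have [n hxz] : exists n, d x z = n by eexists.
elim: n x hxz Wx => [|n IH] x hxz Wx hz; first by rewrite -(dist_eq0 hxz).
have [x1 exx1 hx1z] := dist_step hxz.
have := dist_triangle x1 z y; have := dist_triangle x x1 y.
rewrite (dist_edge exx1) => h1 h2.
have hx1y : d x1 y + 1 = d x y by nlia.
by apply: (IH x1) => //; [apply: W_geodesic_step eab Wx Wy exx1 hx1y | nlia].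
Qed.

Lemma W_convexS a b x y z : e a b -> W a b x = W a b y ->
  d x z + d z y = d x y -> W a b z = W a b x.
Proof.
move=> eab; have eba : e b a by rewrite e_sym.
case Wx: (W a b x) => Wy hz; first by apply: W_convex eab Wx _ hz; rewrite -Wy.
apply/negbTE; rewrite W_swap //.
by apply: W_convex eba _ _ hz; rewrite -W_swap // ?Wx -?Wy.
Qed.

Lemma W_centre a b : e a b -> W a b a && ~~ W a b b.
Proof. by move=> eab; rewrite /W !dist0 (dist_edge eab) (dist_edgeC eab). Qed.

(* In the square c c' f' f, c' lies between c and f' and c lies between c'
   and f, so by convexity ff' cannot stay on one side when cc' crosses. *)
Lemma theta_step_crossing a b p q : e a b -> theta_step e p q ->
  W a b p.1 != W a b p.2 -> W a b q.1 != W a b q.2.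
Proof.
case: p q => c c' [f f'] eab; rewrite /theta_step /is_edge /=.
case/andP=> /andP[ecc' eff'] /orP[/eqP[-> ->]|/and4P[ecf ec'f' ncf' nc'f]].
  by rewrite eq_sym.
move=> hc; apply/negP => /eqP hff'.
have dcf' : d c c' + d c' f' = d c f'.
  by rewrite (dist_edge ecc') (dist_edge ec'f') (dist_common_neighbour ncf' ecc').
have dc'f : d c' c + d c f = d c' f.
  rewrite (dist_edgeC ecc') (dist_edge ecf) (dist_common_neighbour nc'f _ ecf) //.
  by rewrite e_sym.
have [hcf|hcf] := eqVneq (W a b c) (W a b f).
  by move: hc; rewrite (W_convexS eab (etrans hcf hff') dcf') eqxx.
have hc'f : W a b c' = W a b f.
  by move: hc hcf; case: (W a b c); case: (W a b c'); case: (W a b f).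
by move: hc; rewrite (W_convexS eab hc'f dc'f) eqxx.
Qed.

Lemma theta_class_crossing a b x y : e a b ->
  (x, y) \in theta_class e a b -> W a b x != W a b y.
Proof.
move=> eab; rewrite inE => /andP[_ /connectP[s pth hxy]].
change (W a b (x, y).1 != W a b (x, y).2); rewrite {}hxy.
have /andP[Wa nWb] := W_centre eab.
have : W a b (a, b).1 != W a b (a, b).2 by rewrite /= Wa (negbTE nWb).
elim: s (a, b) pth => [|q s IH] p //= /andP[hpq hs] hp.
exact: IH hs (theta_step_crossing eab hpq hp).
Qed.

Lemma crossing_theta_connect a b x t : e a b -> e x t -> W a b x -> W b a t ->
  connect (theta_step e) (a, b) (x, t).
Proof.
move=> eab; have [n hxa] : exists n, d x a = n by eexists.
elim: n x t hxa => [|n IH] x t hxa ext Wx Wt.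
  move/dist_eq0: hxa => hxa; subst x.
  by rewrite (crossing_edge_at eab ext Wt) connect0.
have [x' [t' [[ex'x et't ex't'] [hx'a Wx' Wt']]]] :=
  crossing_edge_descend eab ext Wx Wt hxa.
apply: connect_trans (IH x' t' hx'a ex't' Wx' Wt') (connect1 _).
rewrite /theta_step /is_edge /= ex't' ext ex'x et't (W_neq Wx' Wt).
by rewrite (eq_sym t') (W_neq Wx Wt') orbT.
Qed.

Lemma theta_classE a b x y : e a b ->
  ((x, y) \in theta_class e a b) = e x y && (W a b x != W a b y).
Proof.
move=> eab; apply/idP/andP => [hxy|[exy]].
  by split; [move: hxy; rewrite inE => /andP[] | exact: theta_class_crossing hxy].
rewrite inE /is_edge /= exy /=; have eyx : e y x by rewrite e_sym.
case Wx: (W a b x); case Wy: (W a b y) => //= _.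
  by apply: crossing_theta_connect; rewrite // -W_swap // Wy.
have nWx : W b a x by rewrite -W_swap // Wx.
apply: connect_trans (crossing_theta_connect eab eyx Wy nWx) (connect1 _).
by rewrite /theta_step /is_edge /= eyx exy eqxx.
Qed.

Lemma connect_to_centre (r : rel T) c c' x : e c c' ->
  (forall p q, e p q -> W c c' p -> W c c' q -> r p q) -> W c c' x -> connect r x c.
Proof.
move=> ecc' hr; have [n hxc] : exists n, d x c = n by eexists.
elim: n x hxc => [|n IH] x hxc Wx; first by rewrite (dist_eq0 hxc) connect0.
have [x' exx' hx'c] := dist_step hxc.
have Wx' : W c c' x' by apply: W_between Wx _; rewrite (dist_edge exx'); nlia.
exact: connect_trans (connect1 (hr _ _ exx' Wx Wx')) (IH x' hx'c Wx').
Qed.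

Lemma connect_del_theta_class a b x y : e a b ->
  connect (del_rel e (theta_class e a b)) x y = (W a b x == W a b y).
Proof.
move=> eab; have eba : e b a by rewrite e_sym.
set r := [rel x y | e x y && (W a b x == W a b y)].
have -> : connect (del_rel e (theta_class e a b)) x y = connect r x y.
  apply: eq_connect => p q; rewrite /del_rel theta_classE //=.
  by case: (e p q); rewrite //= negbK.
have r_sym : connect_sym r by apply: sym_connect_sym => p q; rewrite /= e_sym eq_sym.
apply/idP/eqP => [/connectP[s pth ->]|hxy].
  by elim: s x pth => //= z s IH x /andP[/andP[_ /eqP ->] /IH].
have [c [c' [ecc' Wxy hr]]] : exists c c', [/\ e c c', W c c' x && W c c' y &
    forall p q, e p q -> W c c' p -> W c c' q -> r p q].
  case Wx: (W a b x).
    exists a, b; split => //; first by rewrite -hxy Wx.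
    by move=> p q epq Wp Wq; rewrite /= epq Wp Wq.
  have Wba p : W b a p = ~~ W a b p by rewrite W_swap.
  exists b, a; split => //; first by rewrite !Wba -hxy Wx.
  by move=> p q epq; rewrite !Wba /= epq => /negbTE-> /negbTE->.
case/andP: Wxy => Wx Wy.
apply: connect_trans (connect_to_centre ecc' hr Wx) _.
by rewrite r_sym (connect_to_centre ecc' hr Wy).
Qed.

Lemma ladder_median v0 u v m :
  m \in interval e u v :&: interval e v v0 :&: interval e v0 u ->
  ladder e v0 m = ladder e v0 u :&: ladder e v0 v.
Proof.
rewrite !inE => /andP[/andP[/eqP huv /eqP hvv0] /eqP hv0u].
apply/setP => E; rewrite !inE.
case/boolP: (is_theta_class e E) => //= /existsP[a /existsP[b /andP[eab /eqP ->]]].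
rewrite !connect_del_theta_class //.
have b1 : (W a b v0 == W a b u) ==> (W a b m == W a b v0).
  by apply/implyP => /eqP h; rewrite (W_convexS eab h hv0u).
have b2 : (W a b v == W a b v0) ==> (W a b m == W a b v).
  by apply/implyP => /eqP h; rewrite (W_convexS eab h hvv0).
have b3 : (W a b u == W a b v) ==> (W a b m == W a b u).
  by apply/implyP => /eqP h; rewrite (W_convexS eab h huv).
move: b1 b2 b3; case: (W a b m); case: (W a b u); case: (W a b v);
  case: (W a b v0); by case: [exists w, _].
Qed.

End MedianGraph.

Theorem mainTheorem13 (T : finType) (e : rel T)
  (hG : simple_connected_graph e) (hmed : median_graph e) (hU3 : in_U3 e)
  (hn : 3 <= #|T|)
  (v0 : T) (hv0 : in_all_majority_halfspaces e v0)
  (u v : T) (hu : u != v0) (hv : v != v0)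
  (hneq : ladder e v0 u != ladder e v0 v)
  (hint : ladder e v0 u :&: ladder e v0 v != set0)
  (m : T)
  (hm : m \in interval e u v :&: interval e v v0 :&: interval e v0 u) :
  m != v0 /\ ladder e v0 m = ladder e v0 u :&: ladder e v0 v.
Proof.
case: hG => e_sym [e_irr e_conn].
have hL := ladder_median e_sym e_irr e_conn hmed hm.
split=> //; apply/eqP => hmv0.
by case/set0Pn: hint => E; rewrite -hL inE hmv0 connect0 andbF.
Qed.
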